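(* Let $r=[r_0,\ldots,r_m]$ and $c=[c_0,\ldots,c_n]$ be strictly increasing sequences of nonnegative integers with $r_0\le c_n$, and let $\{\hat r,\hat c\}$ be an ordered sub-pair of $\{r,c\}$ of length $p+1\ge 1$, $\hat c=[\hat c_0,\ldots,\hat c_p]$. Let $A$ be the $(m+1)\times(p+1)$ real matrix with entries $$A_{i,j}=\frac{1}{r_i!}\,\frac{d^{r_i}}{dx^{r_i}}\big(x^{\hat c_j}\big)\Big|_{x=1},\qquad 0\le i\le m,\ 0\le j\le p.$$ Then $A$ has full column rank $p+1$.
   Context: A pair $\{\hat r,\hat c\}$ is an ordered sub-pair of $\{r,c\}$ of length $p+1$ if $\hat r=[\hat r_0,\ldots,\hat r_p]$ is a subsequence of $r$, $\hat c=[\hat c_0,\ldots,\hat c_p]$ is a subsequence of $c$, and $\hat r_i\le \hat c_i$ for all $i=0,\ldots,p$. (Note $A_{i,j}=\binom{\hat c_j}{r_i}$, with $\binom{a}{b}:=0$ for $b>a$.) *)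

From HB Require Import structures.
From mathcomp Require Import all_boot all_order all_algebra.
Set Implicit Arguments. Unset Strict Implicit. Unset Printing Implicit Defensive.
Import Order.TTheory GRing.Theory Num.Theory.

Definition ordered_subpair (r c rh ch : seq nat) (p : nat) : Prop :=
  [/\ subseq rh r, subseq ch c, size rh = p.+1, size ch = p.+1 &
      forall i, i < p.+1 -> nth 0 rh i <= nth 0 ch i].

Definition derivA (R : realFieldType) (m p : nat) (r ch : seq nat)
  : 'M[R]_(m.+1, p.+1) :=
  \matrix_(i < m.+1, j < p.+1)
    ((((('X ^+ (nth 0 ch j) : {poly R}) ^`(nth 0 r i)).[1]) / ((nth 0 r i)`!)%:R))%R.

From HB Require Import structures.
From mathcomp Require Import all_boot all_order all_algebra zify.
Import Order.TTheory GRing.Theory Num.Theory.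

Set Implicit Arguments.
Unset Strict Implicit.
Unset Printing Implicit Defensive.

(* Picking the rows of A indexed by rh gives the transpose of the binomial
   matrix M(k, c) = ('C(c_j, k_i))_{j,i} with k = rh, c = ch, because
   (x^c)^(k)(1) / k! = 'C(c, k).  For strictly increasing k and c with
   k_i <= c_i this minor is positive, by induction on the size and on k_0.
   If k_0 > 0, the identity c 'C(c-1, k-1) = k 'C(c, k) factors det M(k, c)
   as a positive multiple of det M(k-1, c-1).  If k_0 = 0, the first column
   is all ones; subtracting consecutive rows and expanding along it leaves a
   matrix whose row j is the sum over c_j <= t < c_(j+1) of the rows of
   binomials 'C(t, k_(i+1) - 1).  By multilinearity its determinant is a sum
   of smaller minors M(k', t) with t strictly increasing, all nonnegative,
   one of which (t_j = c_(j+1) - 1) is positive. *)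

Definition increasing_on (n : nat) (f : nat -> nat) :=
  forall i j, i < j < n -> f i < f j.

Lemma increasing_on_nth (s : seq nat) :
  sorted ltn s -> increasing_on (size s) (nth 0 s).
Proof.
move=> sorted_s i j /andP[lt_ij lt_jn].
by apply: (sorted_ltn_nth ltn_trans) => //; rewrite inE // (ltn_trans lt_ij).
Qed.

Lemma increasing_on_shift n f :
  increasing_on n.+1 f -> increasing_on n (fun i => f i.+1).
Proof.
by move=> incr_f i j /andP[lt_ij lt_jn]; apply: incr_f; rewrite !ltnS lt_ij.
Qed.

Lemma increasing_on_pred n f : (forall i, i < n -> 0 < f i) ->
  increasing_on n f -> increasing_on n (fun i => (f i).-1).
Proof.
move=> f_gt0 incr_f i j /andP[lt_ij lt_jn].
have := f_gt0 i (ltn_trans lt_ij lt_jn).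
by have := incr_f i j; rewrite lt_ij lt_jn => /(_ isT); lia.
Qed.

Lemma increasing_on_gt0 n f : increasing_on n f -> 0 < f 0 ->
  forall i, i < n -> 0 < f i.
Proof.
move=> incr_f f0_gt0 [//|i] lt_in.
by apply: ltn_trans f0_gt0 (incr_f 0 i.+1 _); rewrite lt_in.
Qed.

Lemma bin_telescope c d K : c <= d ->
  'C(d, K.+1) = 'C(c, K.+1) + \sum_(c <= t < d) 'C(t, K).
Proof.
elim: d => [|d IHd]; first by rewrite leqn0 => /eqP->; rewrite big_geq // addn0.
rewrite leq_eqVlt => /orP[/eqP<-|]; first by rewrite big_geq // addn0.
by rewrite ltnS => le_cd; rewrite big_nat_recr //= binS IHd // addnA.
Qed.

Lemma horner1_derivnXn (R : numFieldType) a b :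
  ((('X^a : {poly R})^`(b)).[1] / b`!%:R = 'C(a, b)%:R)%R.
Proof.
rewrite nderivn_def nderivnXn !hornerMn hornerXn expr1n -mulrnA natrM mulfK //.
by rewrite pnatr_eq0 -lt0n fact_gt0.
Qed.

Definition replace_at (f : nat -> nat) (j x : nat) : nat -> nat :=
  fun l => if l == j then x else f l.

Lemma replace_at_other f j x l : l != j -> replace_at f j x l = f l.
Proof. by rewrite /replace_at => /negbTE ->. Qed.

Definition ordered_intervals (n : nat) (a b : nat -> nat) :=
  (forall j, j < n -> a j < b j) /\ (forall i j, i < j < n -> b i <= a j).

Lemma ordered_intervals_last n a b :
  ordered_intervals n a b -> increasing_on n (fun j => (b j).-1).
Proof.
move=> [lt_ab le_ba] i j /andP[lt_ij lt_jn].
have := lt_ab j lt_jn; have := le_ba i j; rewrite lt_ij lt_jn.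
by move=> /(_ isT); have := lt_ab i (ltn_trans lt_ij lt_jn); lia.
Qed.

Lemma ordered_intervals_split n a b j s : j < n -> a j < s < b j ->
  ordered_intervals n a b ->
  ordered_intervals n a (replace_at b j s) /\
  ordered_intervals n (replace_at a j s) b.
Proof.
move=> lt_jn /andP[lt_as lt_sb] [lt_ab le_ba]; rewrite /replace_at.
split; split=> [l lt_ln|i l /andP[lt_il lt_ln]].
- by case: eqP => [->|_]; [exact: lt_as | exact: lt_ab].
- have := le_ba i l; rewrite lt_il lt_ln => /(_ isT).
  by case: eqP => [->|_] //; have := lt_ab i (ltn_trans lt_il lt_ln); lia.
- by case: eqP => [->|_]; [exact: lt_sb | exact: lt_ab].
- have := le_ba i l; rewrite lt_il lt_ln => /(_ isT).
  by case: eqP => [->|_] //; have := lt_ab l lt_ln; lia.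
Qed.

Lemma sum_replace_lt n (F G : nat -> nat) (j : 'I_n) :
  F j < G j -> (forall l : 'I_n, l != j -> F l = G l) ->
  \sum_(l < n) F l < \sum_(l < n) G l.
Proof.
move=> lt_j eq_l; rewrite (bigD1 j) //= [X in _ < X](bigD1 j) //=.
by rewrite (eq_bigr (fun l : 'I_n => G l)) ?ltn_add2r // => l /eq_l.
Qed.

Section BinomialMatrices.

Variable R : realFieldType.
Local Open Scope ring_scope.

Definition binom_mx n (k c : nat -> nat) : 'M[R]_n :=
  \matrix_(j < n, i < n) 'C(c j, k i)%:R.

Definition binom_sum_mx n (k a b : nat -> nat) : 'M[R]_n :=
  \matrix_(j < n, i < n) \sum_(a j <= t < b j) 'C(t, k i)%:R.

Lemma binom_sum_mx_singletons n k (a b : nat -> nat) :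
  (forall j : 'I_n, b j = (a j).+1) ->
  binom_sum_mx n k a b = binom_mx n k (fun j => (b j).-1).
Proof. by move=> b_a; apply/matrixP => j i; rewrite !mxE b_a big_nat1. Qed.

Lemma det_binom_sum_mx_split n k (a b : nat -> nat) (j : 'I_n) s :
  (a j <= s <= b j)%N ->
  \det (binom_sum_mx n k a b) =
  \det (binom_sum_mx n k a (replace_at b j s)) +
  \det (binom_sum_mx n k (replace_at a j s) b).
Proof.
move=> /andP[le_as le_sb].
have other_rows (c d : nat -> nat) : (forall l : 'I_n, l != j -> c l = d l) ->
    row' j (binom_sum_mx n k c b) = row' j (binom_sum_mx n k d b) /\
    row' j (binom_sum_mx n k a c) = row' j (binom_sum_mx n k a d).
  by move=> cd; split; apply/matrixP => l i; rewrite !mxE cd // eq_sym neq_lift.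
rewrite -[X in _ = X + _]mul1r -[X in _ = _ + X]mul1r.
apply: (determinant_multilinear (i0 := j)).
- apply/rowP => i; rewrite !mxE /replace_at !eqxx !mul1r.
  by rewrite (@big_cat_nat _ _ _ s).
- by have [_ ->] := other_rows _ _ (fun l l_j => replace_at_other b s l_j).
- by have [-> _] := other_rows _ _ (fun l l_j => replace_at_other a s l_j).
Qed.

Lemma det_binom_mx_pred n k c : (forall i, (i < n)%N -> (0 < k i)%N) ->
  \det (binom_mx n k c) =
  (\prod_(j < n) (c j)%:R)
  * \det (binom_mx n (fun i => (k i).-1) (fun j => (c j).-1))
  / \prod_(i < n) (k i)%:R.
Proof.
move=> k_gt0.
have -> : binom_mx n k c =
    diag_mx (\row_j (c j)%:R)
    *m binom_mx n (fun i => (k i).-1) (fun j => (c j).-1)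
    *m diag_mx (\row_i (k i)%:R^-1).
  apply/matrixP => j i; rewrite mul_mx_diag mul_diag_mx !mxE.
  have k_i := k_gt0 i (ltn_ord i).
  rewrite -natrM mul_bin_diag prednK // natrM mulrC mulKf //.
  by rewrite pnatr_eq0 -lt0n.
rewrite !det_mulmx !det_diag -prodfV.
by congr (_ * _ * _); apply: eq_bigr => i _; rewrite mxE.
Qed.

Lemma det_binom_mx_k0 n k c : k 0%N = 0%N ->
  increasing_on n.+1 k -> increasing_on n.+1 c ->
  \det (binom_mx n.+1 k c) =
  \det (binom_sum_mx n (fun i => (k i.+1).-1) c (fun j => c j.+1)).
Proof.
move=> k0 incr_k incr_c; set P := binom_mx n.+1 k c.
pose S : 'M[R]_n.+1 := \matrix_(j, l) (j == l.+1 :> nat)%:R.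
have det_1S : \det (1 - S) = 1.
  rewrite det_trig; last first.
    apply/is_trig_mxP => j l lt_jl; rewrite !mxE.
    have -> : (j == l) = false := ltn_eqF lt_jl.
    by rewrite ltn_eqF ?subr0 // ltnS ltnW.
  apply: big1 => j _; rewrite !mxE eqxx.
  by rewrite (_ : (j == j.+1 :> nat) = false) ?subr0 //; lia.
have SP j i : (S *m P) j i = (0 < j)%N%:R * 'C(c j.-1, k i)%:R.
  rewrite !mxE; case: (posnP j) => [j0|j_gt0].
    by rewrite j0 mul0r; apply: big1 => l _; rewrite !mxE j0 mul0r.
  have j' : (j.-1 < n.+1)%N by rewrite (leq_ltn_trans (leq_pred j)).
  rewrite (bigD1 (Ordinal j')) //= big1 ?addr0 => [|l ne_l]; rewrite !mxE.
    by rewrite prednK // eqxx.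
  rewrite (_ : (j == l.+1 :> nat) = false) ?mul0r //; apply: contraNF ne_l.
  by move=> /eqP j_l; apply/eqP/val_inj; rewrite /= j_l.
set Q := (1 - S) *m P.
have QE j i : Q j i = 'C(c j, k i)%:R - (0 < j)%N%:R * 'C(c j.-1, k i)%:R.
  by rewrite /Q mulmxBl mul1mx -SP !mxE.
have -> : \det P = \det Q by rewrite det_mulmx det_1S mul1r.
clearbody Q.
rewrite (expand_det_col _ ord0) big_ord_recl big1 => [|j _]; last first.
  by rewrite QE k0 !bin0 /= mulr1 subrr mul0r.
rewrite QE k0 !bin0 mul0r subr0 mul1r addr0 /cofactor expr0 mul1r.
congr (\det _); apply/matrixP => j i; rewrite !mxE QE !lift0 /= mul1r.
have k_i : (0 < k i.+1)%N by rewrite -k0; apply: incr_k; exact: ltn_ord.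
have le_c : (c j <= c j.+1)%N.
  by apply/ltnW/incr_c; rewrite ltnSn; exact: ltn_ord.
rewrite -(prednK k_i) (bin_telescope _ le_c) natrD addrAC subrr add0r natr_sum.
by rewrite prednK.
Qed.

Section IntervalSums.

Variables (n : nat) (k : nat -> nat).
Hypothesis det_binom_mx_ge0 :
  forall c, increasing_on n c -> 0 <= \det (binom_mx n k c).

(* By multilinearity in each row, the determinant is the sum of the
   det (binom_mx n k t) over all choices a_j <= t_j < b_j; such t are
   increasing, and t = b - 1 is one of them. *)
Lemma det_binom_sum_mx_ge a b : ordered_intervals n a b ->
  \det (binom_mx n k (fun j => (b j).-1)) <= \det (binom_sum_mx n k a b).
Proof.
have [N] := ubnP (\sum_(j < n) (b j - a j))%N.
elim: N a b => // N IHN a b lt_len ok_ab.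
case: (pickP (fun j : 'I_n => (a j).+1 < b j)%N) => [j long_j|short];
  last first.
  rewrite binom_sum_mx_singletons // => j.
  by have := short j; have := ok_ab.1 j (ltn_ord j); rewrite /=; lia.
have in_j : (a j < (b j).-1 < b j)%N by apply/andP; split; lia.
have [ok1 ok2] := ordered_intervals_split (ltn_ord j) in_j ok_ab.
have shorter (c d : nat -> nat) : (c j - d j < b j - a j)%N ->
    (forall l : 'I_n, l != j -> c l = b l /\ d l = a l) ->
    (\sum_(l < n) (c l - d l) < N)%N.
  move=> lt_j cd_l; rewrite ltnS in lt_len; apply: leq_trans lt_len.
  apply: (@sum_replace_lt n (fun l => c l - d l)%N (fun l => b l - a l)%N j).
  exact: lt_j.
  by move=> l /cd_l [-> ->].
have le_j : (a j <= (b j).-1 <= b j)%N by lia.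
rewrite (det_binom_sum_mx_split k le_j).
rewrite -[X in X <= _]add0r lerD //.
  apply: le_trans (det_binom_mx_ge0 (ordered_intervals_last ok1)) _.
  apply: IHN ok1; apply: shorter => [|l l_j]; last by rewrite replace_at_other.
  by rewrite /replace_at eqxx; lia.
apply: IHN ok2; apply: shorter => [|l l_j]; last by rewrite replace_at_other.
by rewrite /replace_at eqxx; lia.
Qed.

End IntervalSums.

Lemma increasing_on_shift_pred n k : increasing_on n.+1 k ->
  increasing_on n (fun i => (k i.+1).-1).
Proof.
move=> incr_k; apply/increasing_on_pred/increasing_on_shift => // i lt_in.
by apply: leq_ltn_trans (incr_k 0%N i.+1 _); rewrite ?ltnS.
Qed.

Lemma consecutive_intervals n c : increasing_on n.+1 c ->
  ordered_intervals n c (fun j => c j.+1).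
Proof.
move=> incr_c; split=> [j lt_jn|i j /andP[lt_ij lt_jn]].
  by apply: incr_c; rewrite ltnSn ltnS.
move: lt_ij; rewrite leq_eqVlt => /orP[/eqP-> // | lt_ij].
by apply/ltnW/incr_c; rewrite lt_ij ltnS ltnW.
Qed.

Lemma det_binom_mx_ge0 n k c : increasing_on n k -> increasing_on n c ->
  0 <= \det (binom_mx n k c).
Proof.
elim: n k c => [|n IHn] k c; first by rewrite det_mx00.
move Ek0 : (k 0%N) => k0.
elim: k0 k c Ek0 => [|k0 IHk] k c k_0 incr_k incr_c.
  have incr_k' := increasing_on_shift_pred incr_k.
  have ok := consecutive_intervals incr_c.
  rewrite det_binom_mx_k0 //.
  apply: le_trans (IHn _ _ incr_k' (ordered_intervals_last ok)) _.
  exact: det_binom_sum_mx_ge (fun c' => IHn _ c' incr_k') _ _ ok.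
have k0_gt0 : (0 < k 0%N)%N by rewrite k_0.
have k_gt0 := increasing_on_gt0 incr_k k0_gt0.
rewrite det_binom_mx_pred //; case: (posnP (c 0%N)) => [c_0|c0_gt0].
  by rewrite (bigD1 ord0) //= c_0 !mul0r.
have c_gt0 := increasing_on_gt0 incr_c c0_gt0.
apply: divr_ge0; last by apply: prodr_ge0 => i _; rewrite ler0n.
apply: mulr_ge0; first by apply: prodr_ge0 => i _; rewrite ler0n.
apply: IHk; first by rewrite k_0.
- exact: increasing_on_pred.
- exact: increasing_on_pred.
Qed.

Lemma det_binom_mx_gt0 n k c : increasing_on n k -> increasing_on n c ->
  (forall i, (i < n)%N -> (k i <= c i)%N) -> 0 < \det (binom_mx n k c).
Proof.
elim: n k c => [|n IHn] k c; first by rewrite det_mx00.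
move Ek0 : (k 0%N) => k0.
elim: k0 k c Ek0 => [|k0 IHk] k c k_0 incr_k incr_c le_kc.
  have incr_k' := increasing_on_shift_pred incr_k.
  have ok := consecutive_intervals incr_c.
  rewrite det_binom_mx_k0 //.
  apply: lt_le_trans (IHn _ _ incr_k' (ordered_intervals_last ok) _) _.
    by move=> i lt_in; have := le_kc i.+1 lt_in; lia.
  exact: det_binom_sum_mx_ge (fun c' => det_binom_mx_ge0 incr_k') _ _ ok.
have k0_gt0 : (0 < k 0%N)%N by rewrite k_0.
have k_gt0 := increasing_on_gt0 incr_k k0_gt0.
have c_gt0 := increasing_on_gt0 incr_c (leq_trans k0_gt0 (le_kc 0%N isT)).
rewrite det_binom_mx_pred //.
apply: divr_gt0; last by apply: prodr_gt0 => i _; rewrite ltr0n k_gt0.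
apply: mulr_gt0; first by apply: prodr_gt0 => i _; rewrite ltr0n c_gt0.
apply: IHk; first by rewrite k_0.
- exact: increasing_on_pred.
- exact: increasing_on_pred.
- by move=> i lt_in; have := le_kc i lt_in; lia.
Qed.

End BinomialMatrices.

Theorem corollary2 (R : realFieldType) (m n p : nat) (r c rh ch : seq nat) :
  size r = m.+1 -> size c = n.+1 ->
  sorted ltn r -> sorted ltn c ->
  nth 0 r 0 <= nth 0 c n ->
  ordered_subpair r c rh ch p ->
  \rank (derivA R m p r ch) = p.+1.
Proof.
move=> size_r _ sorted_r sorted_c _ [sub_rh sub_ch size_rh size_ch le_rh_ch].
have incr_rh : increasing_on p.+1 (nth 0 rh).
  rewrite -size_rh; apply: increasing_on_nth.
  by apply: (subseq_sorted _ sub_rh sorted_r); exact: ltn_trans.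
have incr_ch : increasing_on p.+1 (nth 0 ch).
  rewrite -size_ch; apply: increasing_on_nth.
  by apply: (subseq_sorted _ sub_ch sorted_c); exact: ltn_trans.
pose row_of (i : 'I_p.+1) : 'I_m.+1 := inord (index (nth 0 rh i) r).
have rh_in_r (i : 'I_p.+1) : nth 0 rh i \in r.
  by apply: (mem_subseq sub_rh); rewrite mem_nth // size_rh.
have minor : rowsub row_of (derivA R m p r ch) =
    (binom_mx R p.+1 (nth 0 rh) (nth 0 ch))^T%R.
  apply/matrixP => i j; rewrite !mxE horner1_derivnXn inordK ?nth_index //.
  by rewrite -size_r index_mem.
have minor_unit : rowsub row_of (derivA R m p r ch) \in unitmx.
  by rewrite minor unitmx_tr unitmxE unitfE gt_eqF // det_binom_mx_gt0.
apply/eqP; rewrite eqn_leq rank_leq_col -{1}(mxrank_unit minor_unit).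
by rewrite rowsubE mxrankM_maxr.
Qed.
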